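(* Let $p,q$ be odd positive integers with $\gcd(p,q)=1$ and $p/q-1\in(-1,1)$. Then \[ \mathcal{O}(p/q)=\{\pm A(4\ell^2/q^2):\ \ell\in\{0,1,\dots,(q-1)/2\}\} \] and \[ \mathcal{E}(p/q)=\{\pm A((2\ell+1)^2/q^2):\ \ell\in\{0,1,\dots,(q-3)/2\}\}. \]
   Context: Nodes: $x_{k,n}:=2k/n-1$, $k=0,\dots,n$; $D_n(x)=\sum_{k=0}^n(-1)^k\frac{1}{x-x_{k,n}}$. $A(y)=\sum_{k=0}^\infty(-1)^k\frac{4k+2}{(2k+1)^2-y}$ for $y\in[0,1)$. A sequence $n_j$ is a strictly increasing map $\mathbb{N}\to\mathbb{N}$, odd (even) if all $n_j$ are odd (even); $x$ is regular for $n_j$ if there is $j_0$ with $x\notin\{x_{0,n_j},\dots,x_{n_j,n_j}\}$ for $j\ge j_0$. For a rational $r$ with $x=r-1\in(-1,1)$, $\mathcal{O}(r)$ is the set of $L\in\overline{\mathbb{R}}=\mathbb{R}\cup\{\pm\infty\}$ such that $\lim_{j\to\infty}D_{n_j}(x)/n_j=L$ for some odd sequence $n_j$ for which $x$ is regular; $\mathcal{E}(r)$ is defined likewise with even sequences. *)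

From Stdlib Require Import Reals Lra Lia Arith.
From Coquelicot Require Import Coquelicot.
Open Scope R_scope.

Definition node (k n : nat) : R := 2 * INR k / INR n - 1.

Definition D (n : nat) (x : R) : R :=
  sum_f_R0 (fun k => (-1) ^ k / (x - node k n)) n.

Definition A (y : R) : R :=
  Series (fun k => (-1) ^ k * (4 * INR k + 2) / ((2 * INR k + 1) ^ 2 - y)).

Definition strictly_increasing (nj : nat -> nat) : Prop :=
  forall i j, (i < j)%nat -> (nj i < nj j)%nat.

Definition odd_seq (nj : nat -> nat) : Prop := forall j, Nat.Odd (nj j).
Definition even_seq (nj : nat -> nat) : Prop := forall j, Nat.Even (nj j).

Definition regular (x : R) (nj : nat -> nat) : Prop :=
  exists j0, forall j, (j0 <= j)%nat -> forall k, (k <= nj j)%nat -> x <> node k (nj j).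

Definition Oset (r : R) (L : Rbar) : Prop :=
  exists nj : nat -> nat, strictly_increasing nj /\ odd_seq nj /\ regular (r - 1) nj /\
    is_lim_seq (fun j => D (nj j) (r - 1) / INR (nj j)) L.

Definition Eset (r : R) (L : Rbar) : Prop :=
  exists nj : nat -> nat, strictly_increasing nj /\ even_seq nj /\ regular (r - 1) nj /\
    is_lim_seq (fun j => D (nj j) (r - 1) / INR (nj j)) L.

From Stdlib Require Import Reals Arith Lra Lia List.
From Coquelicot Require Import Coquelicot.
Import ListNotations.
Open Scope R_scope.

(* Write p n = 2 q k + c with 0 <= c < 2 q and put a = c / q, so that n (x + 1) = 2 k + a
   for x = p / q - 1.  When c <> 0, i.e. when x is not a node, D_n(x) / n splits at k into
   two truncated alternating series,
     (-1)^k [ sum_(i <= k) (-1)^i / (2 i + a) + sum_(i < n - k) (-1)^i / (2 i + 2 - a) ],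
   whose sums add up to A((1 - a)^2) by partial fractions, and the alternating-series error
   bound gives D_n(x) / n = (-1)^k A((1 - c/q)^2) + O(q / n).  The main term takes finitely
   many values, so the limit along a regular sequence is one of them, +-A(d^2 / q^2) with
   d = |q - c| < q, and d has the parity opposite to n since p and q are odd.  Conversely p
   is invertible modulo 2 q, so every residue c and both signs of (-1)^k are attained along
   an arithmetic progression of values of n, all of the parity of c. *)

Lemma alternated_series_tail (Un : nat -> R) (l : R) (N : nat) :
  Un_decreasing Un -> Un_cv Un 0 -> Un_cv (fun n => sum_f_R0 (tg_alt Un) n) l ->
  Rabs (sum_f_R0 (tg_alt Un) N - l) <= Un (S N).
Proof.
  intros Hdec Hcv Hl.
  destruct (Nat.Even_or_Odd N) as [[m ->] | [m ->]].
  - destruct (alternated_series_ineq Un l m Hdec Hcv Hl) as [Hlo Hhi].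
    rewrite tech5 in Hlo. unfold tg_alt at 2 in Hlo. rewrite pow_1_odd in Hlo.
    rewrite Rabs_right; lra.
  - destruct (alternated_series_ineq Un l m Hdec Hcv Hl) as [Hlo _].
    destruct (alternated_series_ineq Un l (S m) Hdec Hcv Hl) as [_ Hhi].
    replace (S (2 * m)) with (2 * m + 1)%nat in Hlo by lia.
    replace (2 * S m)%nat with (S (2 * m + 1)) in Hhi by lia.
    assert (Hterm : tg_alt Un (S (2 * m + 1)) = Un (S (2 * m + 1))).
    { unfold tg_alt. replace (S (2 * m + 1)) with (2 * S m)%nat at 1 by lia.
      rewrite pow_1_even. ring. }
    rewrite tech5, Hterm in Hhi. rewrite Rabs_left1; lra.
Qed.

Definition alt_recip (b : R) (i : nat) : R := (-1) ^ i / (2 * INR i + b).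

Section AlternatingReciprocals.

Variable b : R.
Hypothesis b_gt0 : 0 < b.

Let recip (i : nat) : R := / (2 * INR i + b).

Lemma recip_decreasing : Un_decreasing recip.
Proof.
  intro i. unfold recip. rewrite S_INR.
  apply Rinv_le_contravar; pose proof (pos_INR i); lra.
Qed.

Lemma recip_cv0 : Un_cv recip 0.
Proof.
  apply is_lim_seq_Reals.
  assert (Hinf : is_lim_seq (fun i => 2 * INR i + b) p_infty).
  { apply is_lim_seq_le_p_loc with (u := INR); [|exact is_lim_seq_INR].
    exists 0%nat. intros i _. pose proof (pos_INR i). lra. }
  exact (is_lim_seq_inv _ _ Hinf ltac:(discriminate)).
Qed.

Lemma alt_recip_partial_cv :
  Un_cv (fun N => sum_f_R0 (alt_recip b) N) (Series (alt_recip b)).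
Proof.
  destruct (alternated_series recip recip_decreasing recip_cv0) as [l Hl].
  replace (Series (alt_recip b)) with l; [exact Hl|].
  symmetry. apply is_series_unique, is_series_Reals. exact Hl.
Qed.

Lemma ex_series_alt_recip : ex_series (alt_recip b).
Proof. eexists. apply is_series_Reals, alt_recip_partial_cv. Qed.

Lemma alt_recip_tail (N : nat) :
  Rabs (sum_f_R0 (alt_recip b) N - Series (alt_recip b)) <= / (INR N + 1).
Proof.
  eapply Rle_trans.
  - exact (alternated_series_tail recip _ N recip_decreasing recip_cv0 alt_recip_partial_cv).
  - unfold recip. rewrite S_INR. pose proof (pos_INR N).
    apply Rinv_le_contravar; lra.
Qed.

End AlternatingReciprocals.

Lemma A_partial_fractions (a : R) : 0 < a < 2 ->
  A ((1 - a) ^ 2) = Series (alt_recip a) + Series (alt_recip (2 - a)).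
Proof.
  intro Ha.
  rewrite <- Series_plus by (apply ex_series_alt_recip; lra).
  apply Series_ext. intro k. unfold alt_recip. pose proof (pos_INR k).
  replace ((2 * INR k + 1) ^ 2 - (1 - a) ^ 2)
    with ((2 * INR k + a) * (2 * INR k + (2 - a))) by ring.
  field. lra.
Qed.

Lemma D_div_n (n : nat) (x : R) : (0 < n)%nat ->
  D n x / INR n = sum_f_R0 (fun k => (-1) ^ k / (INR n * (x + 1) - 2 * INR k)) n.
Proof.
  intro Hn. assert (Hnr : 0 < INR n) by (apply lt_0_INR; exact Hn).
  unfold D, Rdiv at 1. rewrite Rmult_comm, scal_sum. apply sum_eq. intros k _.
  replace (x - node k n) with ((INR n * (x + 1) - 2 * INR k) * / INR n)
    by (unfold node; field; lra).
  unfold Rdiv. rewrite Rinv_mult, Rinv_inv.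
  generalize (/ (INR n * (x + 1) - 2 * INR k)). intro r. field. lra.
Qed.

Lemma sum_f_R0_rev (g : nat -> R) (m : nat) :
  sum_f_R0 g m = sum_f_R0 (fun i => g (m - i)%nat) m.
Proof.
  induction m as [|m IH]; [reflexivity|].
  rewrite (decomp_sum (fun i => g (S m - i)%nat) (S m)) by lia.
  simpl pred. rewrite Nat.sub_0_r, tech5, IH, Rplus_comm. reflexivity.
Qed.

Lemma pow_neg1_cases (k : nat) : (-1) ^ k = 1 \/ (-1) ^ k = -1.
Proof.
  induction k as [|k [Hk | Hk]]; simpl; [left | right | left]; try rewrite Hk; ring.
Qed.

Lemma pow_neg1_sub (k i : nat) : (i <= k)%nat -> (-1) ^ (k - i) = (-1) ^ k * (-1) ^ i.
Proof.
  intro Hik. replace k with (k - i + i)%nat at 2 by lia.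
  rewrite pow_add, Rmult_assoc, <- pow_add.
  replace (i + i)%nat with (2 * i)%nat by lia. rewrite pow_1_even. ring.
Qed.

Lemma alt_sum_split (m n : nat) (a : R) : (m < n)%nat -> 0 < a < 2 ->
  sum_f_R0 (fun k => (-1) ^ k / (2 * INR m + a - 2 * INR k)) n =
  (-1) ^ m * (sum_f_R0 (alt_recip a) m + sum_f_R0 (alt_recip (2 - a)) (n - S m)).
Proof.
  intros Hmn Ha.
  rewrite (tech2 _ m n Hmn), sum_f_R0_rev, Rmult_plus_distr_l, !scal_sum.
  f_equal; apply sum_eq; intros i Hi; unfold alt_recip; pose proof (pos_INR i).
  - rewrite pow_neg1_sub, minus_INR by lia. field. lra.
  - rewrite pow_add, plus_INR, S_INR. simpl. field. lra.
Qed.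

Lemma alt_sum_approx (m n : nat) (a : R) : (m < n)%nat -> 0 < a < 2 ->
  Rabs (sum_f_R0 (fun k => (-1) ^ k / (2 * INR m + a - 2 * INR k)) n
        - (-1) ^ m * A ((1 - a) ^ 2))
  <= / (INR m + 1) + / INR (n - m).
Proof.
  intros Hmn Ha.
  rewrite alt_sum_split, A_partial_fractions by assumption.
  rewrite <- Rmult_minus_distr_l, Rabs_mult, pow_1_abs, Rmult_1_l.
  replace (INR (n - m)) with (INR (n - S m) + 1) by (rewrite <- S_INR; f_equal; lia).
  match goal with |- Rabs (?s1 + ?s2 - (?t1 + ?t2)) <= _ =>
    replace (s1 + s2 - (t1 + t2)) with ((s1 - t1) + (s2 - t2)) by ring end.
  eapply Rle_trans; [apply Rabs_triang|].
  apply Rplus_le_compat; apply alt_recip_tail; lra.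
Qed.

Definition D_asymptote (p q n : nat) : R :=
  (-1) ^ ((p * n) / (2 * q)) * A ((1 - INR ((p * n) mod (2 * q)) / INR q) ^ 2).

Lemma scaled_abscissa (p q n : nat) : (0 < q)%nat ->
  INR n * (INR p / INR q - 1 + 1) =
  2 * INR ((p * n) / (2 * q)) + INR ((p * n) mod (2 * q)) / INR q.
Proof.
  intro Hq. assert (Hqr : 0 < INR q) by (apply lt_0_INR; exact Hq).
  pose proof (f_equal INR (Nat.div_mod_eq (p * n) (2 * q))) as E.
  rewrite plus_INR, !mult_INR in E. simpl (INR 2) in E.
  apply Rmult_eq_reg_r with (INR q); [|lra]. field_simplify; [|lra|lra]. lra.
Qed.

Lemma Rinv_INR_le (m N q : nat) : (0 < m)%nat -> (0 < N)%nat -> (N <= 2 * q * m)%nat ->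
  / INR m <= 2 * INR q / INR N.
Proof.
  intros Hm HN HNm.
  assert (Hmr : 0 < INR m) by (apply lt_0_INR; exact Hm).
  assert (HNr : 0 < INR N) by (apply lt_0_INR; exact HN).
  apply le_INR in HNm. rewrite !mult_INR in HNm. simpl (INR 2) in HNm.
  replace (/ INR m) with (INR N / (INR m * INR N)) by (field; lra).
  replace (2 * INR q / INR N) with (2 * INR q * INR m / (INR m * INR N)) by (field; lra).
  apply Rmult_le_compat_r; [left; apply Rinv_0_lt_compat; nra | lra].
Qed.

Lemma D_asymptote_error (p q n : nat) :
  (0 < p)%nat -> (p < 2 * q)%nat -> (0 < n)%nat -> (p * n) mod (2 * q) <> 0%nat ->
  Rabs (D n (INR p / INR q - 1) / INR n - D_asymptote p q n) <= 4 * INR q / INR n.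
Proof.
  intros Hp Hpq Hn Hc.
  assert (Hqr : 0 < INR q) by (apply lt_0_INR; lia).
  assert (Hnr : 0 < INR n) by (apply lt_0_INR; lia).
  rewrite D_div_n, scaled_abscissa by lia. unfold D_asymptote.
  set (k := ((p * n) / (2 * q))%nat) in *. set (c := ((p * n) mod (2 * q))%nat) in *.
  assert (Hdm : (p * n = 2 * q * k + c)%nat) by apply Nat.div_mod_eq.
  assert (Hcq : (c < 2 * q)%nat) by (apply Nat.mod_upper_bound; lia).
  assert (Ha : 0 < INR c / INR q < 2).
  { assert (Hcr : 0 < INR c < INR (2 * q)) by (split; [apply lt_0_INR | apply lt_INR]; lia).
    rewrite mult_INR in Hcr. simpl (INR 2) in Hcr.
    split; [apply Rdiv_lt_0_compat | apply Rlt_div_l]; lra. }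
  eapply Rle_trans; [apply alt_sum_approx; [nia | exact Ha]|].
  replace (4 * INR q / INR n) with (2 * INR q / INR n + 2 * INR q / INR n) by (field; lra).
  rewrite <- S_INR.
  apply Rplus_le_compat; apply Rinv_INR_le; nia.
Qed.

Lemma node_iff_mod (p q n : nat) : (p < 2 * q)%nat -> (0 < n)%nat ->
  (exists k, (k <= n)%nat /\ INR p / INR q - 1 = node k n) <-> (p * n) mod (2 * q) = 0%nat.
Proof.
  intros Hpq Hn.
  assert (Hqr : 0 < INR q) by (apply lt_0_INR; lia).
  assert (Hnr : 0 < INR n) by (apply lt_0_INR; lia).
  split.
  - intros [k [_ Hk]]. unfold node in Hk.
    assert (E : (p * n = k * (2 * q))%nat).
    { apply INR_eq. rewrite !mult_INR. simpl (INR 2).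
      replace (INR p) with (INR p / INR q * INR q) by (field; lra).
      replace (INR p / INR q) with (2 * INR k / INR n) by lra. field. lra. }
    rewrite E. apply Nat.Div0.mod_mul.
  - intro Hc. exists ((p * n) / (2 * q))%nat.
    pose proof (Nat.div_mod_eq (p * n) (2 * q)) as Hdm. rewrite Hc in Hdm.
    split; [nia|].
    pose proof (scaled_abscissa p q n ltac:(lia)) as E.
    rewrite Hc in E. unfold node.
    enough (H : INR n * (INR p / INR q) = INR n * (2 * INR ((p * n) / (2 * q)) / INR n))
      by (apply Rmult_eq_reg_l in H; lra).
    replace (INR n * (INR p / INR q)) with (INR n * (INR p / INR q - 1 + 1)) by ring.
    rewrite E. simpl (INR 0). field. lra.
Qed.

Lemma strictly_increasing_ge (nj : nat -> nat) :
  strictly_increasing nj -> forall j, (j <= nj j)%nat.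
Proof.
  intros Hinc j. induction j as [|j IH]; [lia|].
  specialize (Hinc j (S j) (Nat.lt_succ_diag_r j)). lia.
Qed.

Lemma D_asymptote_cv (p q : nat) (nj : nat -> nat) (j0 : nat) :
  (0 < p)%nat -> (p < 2 * q)%nat -> strictly_increasing nj ->
  (forall j, (j0 <= j)%nat -> (p * nj j) mod (2 * q) <> 0%nat) ->
  is_lim_seq (fun j => D (nj j) (INR p / INR q - 1) / INR (nj j) - D_asymptote p q (nj j)) 0.
Proof.
  intros Hp Hpq Hinc Hreg.
  assert (Hbound : is_lim_seq (fun j => 4 * INR q / INR (nj j)) 0).
  { replace (Finite 0) with (Rbar_mult (4 * INR q) 0) by (simpl; f_equal; ring).
    apply is_lim_seq_scal_l. replace (Finite 0) with (Rbar_inv p_infty) by reflexivity.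
    apply is_lim_seq_inv; [|discriminate].
    apply is_lim_seq_le_p_loc with (u := INR); [|exact is_lim_seq_INR].
    exists 0%nat. intros j _. apply le_INR, strictly_increasing_ge, Hinc. }
  apply is_lim_seq_abs_0,
    (is_lim_seq_le_le_loc (fun _ => 0) _ (fun j => 4 * INR q / INR (nj j)));
    [| apply is_lim_seq_const | exact Hbound].
  exists (max j0 1). intros j Hj. split; [apply Rabs_pos|].
  pose proof (strictly_increasing_ge nj Hinc j).
  apply D_asymptote_error; try lia. apply Hreg. lia.
Qed.

Lemma list_bounded (s : list R) : exists M, forall x, In x s -> Rabs x <= M.
Proof.
  induction s as [|y s [M HM]]; [exists 0; intros x []|].
  exists (Rmax (Rabs y) M). intros x [<- | Hx].
  - apply Rmax_l.
  - eapply Rle_trans; [apply HM, Hx | apply Rmax_r].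
Qed.

Lemma list_separated (s : list R) (l : R) :
  exists d, 0 < d /\ forall x, In x s -> x <> l -> d <= Rabs (x - l).
Proof.
  induction s as [|y s [d [Hd Hsep]]]; [exists 1; split; [lra | intros x []]|].
  destruct (Req_dec y l) as [Hyl | Hyl].
  - exists d. split; [exact Hd|]. intros x [<- | Hx] Hxl; [contradiction | auto].
  - exists (Rmin d (Rabs (y - l))). split.
    + apply Rmin_glb_lt; [exact Hd | apply Rabs_pos_lt; lra].
    + intros x [<- | Hx] Hxl; [apply Rmin_r|].
      eapply Rle_trans; [apply Rmin_l | auto].
Qed.

Lemma is_lim_seq_finite_values (u : nat -> R) (s : list R) (L : Rbar) :
  (forall j, In (u j) s) -> is_lim_seq u L ->
  exists j0, forall j, (j0 <= j)%nat -> L = Finite (u j).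
Proof.
  intros Hs Hu. apply is_lim_seq_spec in Hu.
  destruct (list_bounded s) as [M HM].
  destruct L as [l| |]; simpl in Hu.
  - destruct (list_separated s l) as [d [Hd Hsep]].
    destruct (Hu (mkposreal d Hd)) as [j0 Hj0]. exists j0. intros j Hj.
    destruct (Req_dec (u j) l) as [-> | Hne]; [reflexivity|].
    specialize (Hj0 j Hj). specialize (Hsep _ (Hs j) Hne). simpl in Hj0. lra.
  - destruct (Hu M) as [j0 Hj0]. specialize (Hj0 j0 (le_n _)).
    specialize (HM _ (Hs j0)). apply Rabs_le_between in HM. lra.
  - destruct (Hu (- M)) as [j0 Hj0]. specialize (Hj0 j0 (le_n _)).
    specialize (HM _ (Hs j0)). apply Rabs_le_between in HM. lra.
Qed.

Lemma D_asymptote_finite_range (p q : nat) :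
  (0 < q)%nat -> exists s : list R, forall n, In (D_asymptote p q n) s.
Proof.
  intro Hq.
  exists (flat_map (fun c => [A ((1 - INR c / INR q) ^ 2); - A ((1 - INR c / INR q) ^ 2)])
            (seq 0 (2 * q))).
  intro n. apply in_flat_map. exists ((p * n) mod (2 * q))%nat. split.
  - apply in_seq. pose proof (Nat.mod_upper_bound (p * n) (2 * q)). lia.
  - unfold D_asymptote. destruct (pow_neg1_cases ((p * n) / (2 * q))) as [-> | ->];
      [left | right; left]; ring.
Qed.

Lemma even_false_of_odd (n : nat) : Nat.Odd n -> Nat.even n = false.
Proof. intro Hn. rewrite <- Nat.negb_odd, (proj2 (Nat.odd_spec n) Hn). reflexivity. Qed.

Lemma even_odd_mul_mod_double (p q n : nat) :
  Nat.Odd p -> Nat.even ((p * n) mod (2 * q)) = Nat.even n.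
Proof.
  intro Hp. transitivity (Nat.even (p * n)).
  - rewrite (Nat.div_mod_eq (p * n) (2 * q)) at 2.
    rewrite Nat.add_comm, <- Nat.mul_assoc, Nat.even_add_mul_2. reflexivity.
  - rewrite Nat.even_mul, (even_false_of_odd p Hp). reflexivity.
Qed.

Lemma center_distance (q c : nat) : (0 < c < 2 * q)%nat ->
  exists d, (d < q)%nat /\ Nat.even (d + c) = Nat.even q /\
    (1 - INR c / INR q) ^ 2 = INR d ^ 2 / INR q ^ 2.
Proof.
  intro Hc. assert (Hqr : 0 < INR q) by (apply lt_0_INR; lia).
  destruct (le_lt_dec c q) as [Hcq | Hqc].
  - exists (q - c)%nat. split; [lia|]. split; [f_equal; lia|].
    rewrite minus_INR by lia. field. lra.
  - exists (c - q)%nat. split; [lia|]. split.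
    + replace (c - q + c)%nat with (q + 2 * (c - q))%nat by lia.
      apply Nat.even_add_mul_2.
    + rewrite minus_INR by lia. field. lra.
Qed.

Lemma odd_inverse_mod_double (p q : nat) : Nat.Odd p -> Nat.gcd p q = 1%nat ->
  exists u w, (u * p = 1 + w * (2 * q))%nat.
Proof.
  intros [a Ha] Hg.
  destruct (Nat.gcd_bezout_pos p q ltac:(lia)) as [u [v Huv]]. rewrite Hg in Huv.
  destruct (Nat.Even_or_Odd v) as [[w Hw] | [w Hw]].
  - exists u, w. lia.
  (* (u + q) p = 1 + (v + p) q, and v + p is even *)
  - exists (u + q)%nat, (w + a + 1)%nat. subst v p. nia.
Qed.

Lemma pow_neg1_adjust (m : nat) (sg : R) : sg = 1 \/ sg = -1 ->
  exists e, (-1) ^ (m + e) = sg.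
Proof.
  intro Hsg. destruct (pow_neg1_cases m) as [Hm | Hm]; destruct Hsg as [-> | ->];
    [exists 0%nat | exists 1%nat | exists 1%nat | exists 0%nat];
    rewrite pow_add, Hm; simpl; ring.
Qed.

Lemma residue_sequence (p q c : nat) (sg : R) :
  Nat.Odd p -> Nat.gcd p q = 1%nat -> (c < 2 * q)%nat -> sg = 1 \/ sg = -1 ->
  exists nj, strictly_increasing nj /\
    forall j, (p * nj j) mod (2 * q) = c /\ (-1) ^ ((p * nj j) / (2 * q)) = sg.
Proof.
  intros Hp Hg Hc Hsg.
  destruct (odd_inverse_mod_double p q Hp Hg) as [u [w Huw]].
  destruct (pow_neg1_adjust (w * c) sg Hsg) as [e He].
  assert (Hu : (0 < u)%nat) by (destruct u; lia).
  (* p n = (1 + 2 q w) (c + 2 q (2 j + e)) = c + 2 q (w c + e + 2 (...)) *)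
  exists (fun j => u * (c + 2 * q * (2 * j + e)))%nat. split.
  - intros i j Hij. apply Nat.mul_lt_mono_pos_l; [exact Hu | nia].
  - intro j. set (k := (w * c + e + 2 * (j + w * q * (2 * j + e)))%nat).
    assert (Hpn : (p * (u * (c + 2 * q * (2 * j + e))) = 2 * q * k + c)%nat)
      by (unfold k; nia).
    rewrite <- (Nat.mod_unique _ _ _ _ Hc Hpn), <- (Nat.div_unique _ _ _ _ Hc Hpn).
    split; [reflexivity|]. unfold k. rewrite pow_add, pow_1_even, He. ring.
Qed.

Section LimitPoints.

Variables p q : nat.
Hypothesis p_odd : Nat.Odd p.
Hypothesis q_odd : Nat.Odd q.
Hypothesis p_lt_2q : (p < 2 * q)%nat.

Lemma limit_point_value (par : bool) (nj : nat -> nat) (L : Rbar) :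
  strictly_increasing nj -> (forall j, Nat.even (nj j) = par) ->
  regular (INR p / INR q - 1) nj ->
  is_lim_seq (fun j => D (nj j) (INR p / INR q - 1) / INR (nj j)) L ->
  exists d, (d < q)%nat /\ Nat.even d = negb par /\
    (L = Finite (A (INR d ^ 2 / INR q ^ 2)) \/ L = Finite (- A (INR d ^ 2 / INR q ^ 2))).
Proof.
  intros Hinc Hpar [j0 Hj0] HL.
  assert (Hp0 : (0 < p)%nat) by (destruct p_odd; lia).
  assert (Hreg : forall j, (max j0 1 <= j)%nat -> (p * nj j) mod (2 * q) <> 0%nat).
  { intros j Hj Hc. pose proof (strictly_increasing_ge nj Hinc j).
    apply (node_iff_mod p q (nj j) p_lt_2q ltac:(lia)) in Hc.
    destruct Hc as [k [Hk Hnode]]. exact (Hj0 j ltac:(lia) k Hk Hnode). }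
  assert (Hasym : is_lim_seq (fun j => D_asymptote p q (nj j)) L).
  { assert (Hminus : is_Rbar_minus L 0 L).
    { destruct L; unfold is_Rbar_minus, is_Rbar_plus; simpl;
        rewrite ?Ropp_0, ?Rplus_0_r; reflexivity. }
    eapply is_lim_seq_ext; [| exact (is_lim_seq_minus _ _ _ _ _ HL
                                (D_asymptote_cv p q nj _ Hp0 p_lt_2q Hinc Hreg) Hminus)].
    intro j. simpl. ring. }
  destruct (D_asymptote_finite_range p q ltac:(lia)) as [s Hs].
  destruct (is_lim_seq_finite_values _ s L (fun j => Hs (nj j)) Hasym) as [j1 Hj1].
  set (j := max j1 (max j0 1)).
  set (c := ((p * nj j) mod (2 * q))%nat).
  assert (Hc : (0 < c < 2 * q)%nat).
  { split; [specialize (Hreg j ltac:(lia)); lia | apply Nat.mod_upper_bound; lia]. }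
  destruct (center_distance q c Hc) as [d [Hdq [Hdc Hval]]].
  exists d. split; [exact Hdq|]. split.
  - rewrite Nat.even_add, (even_false_of_odd q q_odd) in Hdc.
    unfold c in Hdc. rewrite (even_odd_mul_mod_double p q _ p_odd), Hpar in Hdc.
    destruct (Nat.even d), par; easy.
  - rewrite (Hj1 j ltac:(lia)). unfold D_asymptote. fold c. rewrite Hval.
    destruct (pow_neg1_cases ((p * nj j) / (2 * q))) as [-> | ->];
      [left | right]; f_equal; ring.
Qed.

Hypothesis pq_coprime : Nat.gcd p q = 1%nat.

Lemma limit_point_realized (par : bool) (d : nat) (L : Rbar) :
  (d < q)%nat -> Nat.even d = negb par ->
  (L = Finite (A (INR d ^ 2 / INR q ^ 2)) \/ L = Finite (- A (INR d ^ 2 / INR q ^ 2))) ->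
  exists nj, strictly_increasing nj /\ (forall j, Nat.even (nj j) = par) /\
    regular (INR p / INR q - 1) nj /\
    is_lim_seq (fun j => D (nj j) (INR p / INR q - 1) / INR (nj j)) L.
Proof.
  intros Hdq Hdpar HL.
  assert (Hp0 : (0 < p)%nat) by (destruct p_odd; lia).
  assert (Hqr : 0 < INR q) by (apply lt_0_INR; lia).
  assert (Hsg : exists sg, (sg = 1 \/ sg = -1) /\ L = Finite (sg * A (INR d ^ 2 / INR q ^ 2))).
  { destruct HL as [-> | ->]; [exists 1 | exists (-1)]; split; auto; f_equal; ring. }
  destruct Hsg as [sg [Hsg ->]].
  destruct (residue_sequence p q (q - d) sg p_odd pq_coprime ltac:(lia) Hsg) as [nj [Hinc Hnj]].
  assert (Hpos : forall j, (0 < nj j)%nat).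
  { intro j. destruct (Hnj j) as [Hc _]. destruct (nj j); [|lia].
    rewrite Nat.mul_0_r, Nat.Div0.mod_0_l in Hc. lia. }
  assert (Hasym : forall j, D_asymptote p q (nj j) = sg * A (INR d ^ 2 / INR q ^ 2)).
  { intro j. destruct (Hnj j) as [Hc Hs]. unfold D_asymptote. rewrite Hc, Hs.
    f_equal. f_equal. rewrite minus_INR by lia. field. lra. }
  exists nj. split; [exact Hinc|]. split; [|split].
  - intro j. destruct (Hnj j) as [Hc _].
    rewrite <- (even_odd_mul_mod_double p q _ p_odd), Hc.
    pose proof (even_false_of_odd q q_odd) as Hq.
    replace q with (q - d + d)%nat in Hq at 1 by lia.
    rewrite Nat.even_add, Hdpar in Hq. destruct (Nat.even (q - d)), par; easy.
  - exists 0%nat. intros j _ k Hk Hnode.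
    destruct (Hnj j) as [Hc _].
    assert (Hmod : (p * nj j) mod (2 * q) = 0%nat)
      by (apply (node_iff_mod p q (nj j) p_lt_2q (Hpos j)); exists k; auto).
    lia.
  - assert (Hreg : forall j, (0 <= j)%nat -> (p * nj j) mod (2 * q) <> 0%nat)
      by (intros j _; rewrite (proj1 (Hnj j)); lia).
    pose proof (is_lim_seq_plus' _ _ 0 _ (D_asymptote_cv p q nj 0 Hp0 p_lt_2q Hinc Hreg)
                  (is_lim_seq_const (sg * A (INR d ^ 2 / INR q ^ 2)))) as Hsum.
    rewrite Rplus_0_l in Hsum.
    eapply is_lim_seq_ext; [|exact Hsum]. intro j. cbv beta. rewrite Hasym. ring.
Qed.

End LimitPoints.

Lemma odd_seq_iff (nj : nat -> nat) : odd_seq nj <-> forall j, Nat.even (nj j) = false.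
Proof.
  split; intros H j; specialize (H j).
  - exact (even_false_of_odd _ H).
  - apply Nat.odd_spec. rewrite <- Nat.negb_even, H. reflexivity.
Qed.

Lemma even_seq_iff (nj : nat -> nat) : even_seq nj <-> forall j, Nat.even (nj j) = true.
Proof. split; intros H j; apply Nat.even_spec, H. Qed.

Lemma Oset_char (p q : nat) (L : Rbar) :
  Nat.Odd p -> Nat.Odd q -> Nat.gcd p q = 1%nat -> (p < 2 * q)%nat ->
  Oset (INR p / INR q) L <->
  exists l, (2 * l + 1 <= q)%nat /\
    (L = Finite (A (4 * INR l ^ 2 / INR q ^ 2)) \/ L = Finite (- A (4 * INR l ^ 2 / INR q ^ 2))).
Proof.
  intros Hp Hq Hg Hpq.
  assert (INR_double_sq : forall l, INR (2 * l) ^ 2 = 4 * INR l ^ 2)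
    by (intro l; rewrite mult_INR; simpl; ring).
  split.
  - intros [nj [Hinc [Hodd [Hreg HL]]]].
    destruct (limit_point_value p q Hp Hq Hpq false nj L Hinc (proj1 (odd_seq_iff nj) Hodd) Hreg HL)
      as [d [Hdq [Hd HL']]].
    apply Nat.even_spec in Hd. destruct Hd as [l ->].
    exists l. split; [lia|]. rewrite <- INR_double_sq. exact HL'.
  - intros [l [Hl HL]].
    destruct (limit_point_realized p q Hp Hq Hpq Hg false (2 * l) L)
      as [nj [Hinc [Hpar [Hreg Hlim]]]].
    + lia.
    + apply Nat.even_spec. exists l. reflexivity.
    + rewrite INR_double_sq. exact HL.
    + exists nj. split; [exact Hinc|]. split; [apply odd_seq_iff, Hpar | auto].
Qed.

Lemma Eset_char (p q : nat) (L : Rbar) :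
  Nat.Odd p -> Nat.Odd q -> Nat.gcd p q = 1%nat -> (p < 2 * q)%nat ->
  Eset (INR p / INR q) L <->
  exists l, (2 * l + 3 <= q)%nat /\
    (L = Finite (A ((2 * INR l + 1) ^ 2 / INR q ^ 2)) \/
     L = Finite (- A ((2 * INR l + 1) ^ 2 / INR q ^ 2))).
Proof.
  intros Hp Hq Hg Hpq.
  assert (INR_succ_double : forall l, INR (2 * l + 1) = 2 * INR l + 1)
    by (intro l; rewrite plus_INR, mult_INR; reflexivity).
  split.
  - intros [nj [Hinc [Hev [Hreg HL]]]].
    destruct (limit_point_value p q Hp Hq Hpq true nj L Hinc (proj1 (even_seq_iff nj) Hev) Hreg HL)
      as [d [Hdq [Hd HL']]].
    assert (Hd' : Nat.Odd d) by (apply Nat.odd_spec; rewrite <- Nat.negb_even, Hd; reflexivity).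
    destruct Hd' as [l ->]. destruct Hq as [t ->].
    exists l. split; [lia|]. rewrite <- INR_succ_double. exact HL'.
  - intros [l [Hl HL]].
    destruct (limit_point_realized p q Hp Hq Hpq Hg true (2 * l + 1) L)
      as [nj [Hinc [Hpar [Hreg Hlim]]]].
    + lia.
    + rewrite Nat.add_comm, Nat.even_add_mul_2. reflexivity.
    + rewrite INR_succ_double. exact HL.
    + exists nj. split; [exact Hinc|]. split; [apply even_seq_iff, Hpar | auto].
Qed.

Lemma lt_double_of_ratio (p q : nat) : (0 < q)%nat -> INR p / INR q < 2 -> (p < 2 * q)%nat.
Proof.
  intros Hq Hpq. apply Rlt_div_l in Hpq; [|apply lt_0_INR; exact Hq].
  apply INR_lt. rewrite mult_INR. exact Hpq.
Qed.

Theorem corollary3 (p q : nat) :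
  Nat.Odd p -> Nat.Odd q -> (0 < p)%nat -> (0 < q)%nat -> Nat.gcd p q = 1%nat ->
  -1 < INR p / INR q - 1 < 1 ->
  (forall L : Rbar, Oset (INR p / INR q) L <->
     exists l : nat, (2 * l + 1 <= q)%nat /\
       (L = Finite (A (4 * INR l ^ 2 / INR q ^ 2)) \/
        L = Finite (- A (4 * INR l ^ 2 / INR q ^ 2)))) /\
  (forall L : Rbar, Eset (INR p / INR q) L <->
     exists l : nat, (2 * l + 3 <= q)%nat /\
       (L = Finite (A ((2 * INR l + 1) ^ 2 / INR q ^ 2)) \/
        L = Finite (- A ((2 * INR l + 1) ^ 2 / INR q ^ 2)))).
Proof.
  intros Hp Hq _ Hq0 Hg Hx.
  assert (Hpq : (p < 2 * q)%nat) by (apply lt_double_of_ratio; [exact Hq0 | lra]).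
  split; intro L; [apply Oset_char | apply Eset_char]; assumption.
Qed.
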